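(* With $S_\rho$ the globally defined, Lipschitz (in $u$), $p$-periodic cut-off time-dependent semiflow of the lemma above, set $\Phi_t:=S_\rho(t+p,t;\cdot):X\to X$ for $t\in\mathbb{R}$, and for $\gamma>0$ define $G_t(\gamma)=\{u\in X:$ there is a negative semiorbit $\{u_m\}_{m\le0}$ of $\Phi_t$ (i.e. $\Phi_t(u_m)=u_{m+1}$ for $m\le -1$) with $u_0=u$ and $\limsup_{m\to-\infty}\frac{1}{|m|}\ln\|u_m\|\le-\ln\gamma\}$. Then $S_\rho(t,s;G_s(\gamma))=G_t(\gamma)$ for all $t\ge s$.
   Context: $X=C([-\tau,0];\mathbb{R}^n)$ with sup norm. $S_\rho$ is the time-dependent semiflow defined by the cut-off integral equation $S_\rho(t,s;u)=T_0(t-s)u+\iota^{-1}\int_s^t T_0^{\odot*}(t-r)[B(r)S_\rho(r,s;u)+R_{\rho,r}(r,S_\rho(r,s;u))]dr$ (notation as in the periodicity lemma: shift semigroup $T_0$, sun-star extension, embedding $\iota u=(u(0),u)$, linear part $B(t)=D_2F(t,0)$ and cut-off nonlinearity $R_{\rho,r}$ of a $p$-periodic $C^k$ delay equation with $f(t,0)=0$), with $\rho>0$ small enough that $S_\rho$ is defined on $\{t\ge s\}\times X$, $S_\rho(t,s;\cdot)$ is Lipschitz on $X$, and $S_\rho(t+p,s+p;\cdot)=S_\rho(t,s;\cdot)$. The semiflow property $S_\rho(t,r;S_\rho(r,s;u))=S_\rho(t,s;u)$ for $s\le r\le t$ holds. It is moreover assumed (as holds for the invariant manifolds produced by the Lipschitz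 invariant manifold theorem for $\Phi_t$) that $G_{t}(\gamma)=G_{t-jp}(\gamma)$ for $j\in\mathbb{N}$, which follows from $\Phi_{t-jp}=\Phi_t$. *)

From mathcomp Require Import all_boot all_order all_algebra.
From mathcomp Require Import all_classical all_reals all_analysis.
Set Implicit Arguments. Unset Strict Implicit. Unset Printing Implicit Defensive.
Import Order.TTheory GRing.Theory Num.Theory.
Import numFieldNormedType.Exports.
Local Open Scope classical_set_scope.
Local Open Scope ring_scope.

Definition Phi {R : realType} {X : normedModType R}
  (S : R -> R -> X -> X) (p t : R) : X -> X := S (t + p) t.

(* Negative semiorbit of a map f through u, indexed by k = -m >= 0:
   w k = u_{-k}, w 0 = u, f (u_{m}) = u_{m+1} for m <= -1. *)
Definition neg_semiorbit {X : Type} (f : X -> X) (u : X) (w : nat -> X) : Prop :=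
  w 0%N = u /\ forall k : nat, f (w k.+1) = w k.

Definition growth_term {R : realType} {X : normedModType R}
  (w : nat -> X) (k : nat) : \bar R :=
  if `|w k| == 0 then -oo%E else ((ln `|w k|) / k%:R)%:E.

Definition Gset {R : realType} {X : normedModType R}
  (S : R -> R -> X -> X) (p t gamma : R) : set X :=
  [set u | exists w : nat -> X, neg_semiorbit (Phi S p t) u w /\
     (limn_esup (growth_term w) <= (- ln gamma)%:E)%E].

Definition lipschitz_map {R : realType} {X : normedModType R} (f : X -> X) : Prop :=
  exists L : R, forall u v : X, `|f u - f v| <= L * `|u - v|.

(** The time-[p] maps are conjugated by the semiflow, [S t s \o Phi s = Phi t \o S t s],
    so [S t s] carries negative semiorbits of [Phi s] to negative semiorbits of [Phi t];
    being Lipschitz and fixing [0], it changes norms by at most a constant factor, which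
    does not affect the exponential growth rate.  For the converse inclusion go back an
    integer number [j] of periods to [a = t - j p <= s]: [Phi a = Phi t] by periodicity,
    the tail of a semiorbit through [v] in [G_t] starting at its [j]-th term lies in
    [G_a], and its image under [S s a] lies in [G_s] and is mapped to [v] by [S t s],
    since [S t a] is the [j]-th iterate of [Phi t]. *)
From mathcomp Require Import all_boot all_order all_algebra.
From mathcomp Require Import all_classical all_reals all_analysis.
Set Implicit Arguments. Unset Strict Implicit. Unset Printing Implicit Defensive.
Import Order.TTheory GRing.Theory Num.Theory.
Import numFieldNormedType.Exports.
Local Open Scope classical_set_scope.
Local Open Scope ring_scope.

Section GrowthRate.
Variables (R : realType) (X : normedModType R).
Implicit Types (w v : nat -> X) (c : R).

Lemma growth_le_expR_bound w c :
  (limn_esup (growth_term w) <= c%:E)%E <->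
  (forall e, 0 < e -> exists N, forall k, (N <= k)%N -> `|w k| <= expR (k%:R * (c + e))).
Proof.
split=> [H e e0|H].
- have : (ereal_inf [set ereal_sup (growth_term w @` V) | V in \oo] < (c + e)%:E)%E.
    by apply: le_lt_trans H _; rewrite lte_fin ltrDl.
  move=> /ereal_inf_lt [_ [V [N _ NV] <-]] hV.
  exists N.+1 => k Nk.
  have gk : (growth_term w k <= ereal_sup (growth_term w @` V))%E.
    by apply: ereal_sup_ubound; exists k => //; apply/NV/ltnW.
  have := le_lt_trans gk hV; rewrite /growth_term.
  case: eqP => [-> _|/eqP nz]; first exact/ltW/expR_gt0.
  have k0 : (0 < k%:R :> R) by rewrite ltr0n (leq_trans _ Nk).
  rewrite lte_fin ltr_pdivrMr // mulrC => /ltW.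
  by rewrite -ler_expR lnK // posrE lt0r nz normr_ge0.
- apply/lee_addgt0Pr => e e0; have [N HN] := H e e0.
  apply: (@le_trans _ _ (ereal_sup (growth_term w @` [set k | (N.+1 <= k)%N]))).
    by apply: ereal_inf_lbound; exists [set k | (N.+1 <= k)%N] => //; exists N.+1.
  apply: ge_ereal_sup => _ [k /= Nk <-]; rewrite /growth_term.
  case: eqP => [_|/eqP nz]; first exact: leNye.
  have k0 : (0 < k%:R :> R) by rewrite ltr0n (leq_trans _ Nk).
  rewrite -EFinD lee_fin ler_pdivrMr // mulrC.
  rewrite -(expRK (k%:R * (c + e))) ler_ln ?posrE ?expR_gt0 ?lt0r ?nz ?normr_ge0 //.
  exact/HN/ltnW.
Qed.

Lemma growth_le_dominated w v c (C : R) (j : nat) : 0 < C ->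
  (forall k, `|v k| <= C * `|w (j + k)%N|) ->
  (limn_esup (growth_term w) <= c%:E)%E -> (limn_esup (growth_term v) <= c%:E)%E.
Proof.
move=> C0 vw /growth_le_expR_bound Hw; apply/growth_le_expR_bound => e e0.
have e20 : 0 < e / 2 by rewrite divr_gt0.
have [N HN] := Hw (e / 2) e20.
pose D := C * expR (j%:R * (c + e / 2)).
have D0 : 0 < D by rewrite mulr_gt0 ?expR_gt0.
exists (maxn N (Num.Def.truncn (`|ln D| / (e / 2))).+1) => k.
rewrite geq_max => /andP[Nk Dk].
have vD : `|v k| <= D * expR (k%:R * (c + e / 2)).
  apply: le_trans (vw k) _.
  rewrite -mulrA ler_pM2l // -expRD -mulrDl -natrD.
  exact/HN/(leq_trans Nk)/leq_addl.
apply: le_trans vD _.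
have -> : k%:R * (c + e) = k%:R * (e / 2) + k%:R * (c + e / 2).
  by rewrite -mulrDr; congr (_ * _); rewrite addrCA -splitr.
rewrite expRD ler_pM2r ?expR_gt0 // -(lnK (x := D)) ?posrE // ler_expR.
apply: le_trans (ler_norm _) _; rewrite -ler_pdivrMr //.
by apply/ltW/(lt_le_trans (truncnS_gt _)); rewrite ler_nat.
Qed.

End GrowthRate.

Lemma lipschitz_map_linear_bound {R : realType} {X : normedModType R} (f : X -> X) :
  lipschitz_map f -> f 0 = 0 -> exists2 C : R, 0 < C & forall x, `|f x| <= C * `|x|.
Proof.
move=> [L HL] f0; exists (Num.max L 1); first by rewrite lt_max ltr01 orbT.
move=> x; have := HL x 0; rewrite f0 !subr0 => /le_trans; apply.
by rewrite ler_wpM2r // le_max lexx.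
Qed.

Section NegativeSemiorbit.
Variables (T U : Type) (f : T -> T) (u : T) (w : nat -> T).
Hypothesis orbit_w : neg_semiorbit f u w.

Lemma neg_semiorbit_map (g : U -> U) (h : T -> U) :
  (forall x, h (f x) = g (h x)) -> neg_semiorbit g (h u) (h \o w).
Proof.
by case: orbit_w => w0 wS hfg; split=> [|k] /=; rewrite ?w0 // -hfg wS.
Qed.

Lemma neg_semiorbit_drop j : neg_semiorbit f (w j) (fun k => w (j + k)%N).
Proof. by case: orbit_w => _ wS; split=> [|k]; rewrite ?addn0 // addnS wS. Qed.

Lemma neg_semiorbit_iter j : iter j f (w j) = u.
Proof.
case: orbit_w => w0 wS; rewrite -w0.
suff iter_w k : iter j f (w (j + k)%N) = w k by rewrite -[j in w j]addn0 iter_w.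
by elim: j k => [|j IH] k; rewrite ?add0n //= addSnnS IH wS.
Qed.

End NegativeSemiorbit.

Section PeriodicSemiflow.
Variables (R : realType) (X : normedModType R) (S : R -> R -> X -> X) (p : R).
Hypothesis p_ge0 : 0 <= p.
Hypothesis S_id : forall s (u : X), S s s u = u.
Hypothesis S_semiflow :
  forall s r t (u : X), s <= r -> r <= t -> S t r (S r s u) = S t s u.
Hypothesis S_per : forall s t (u : X), s <= t -> S (t + p) (s + p) u = S t s u.

Lemma S_shift_periods (j : nat) s t u :
  s <= t -> S (t + j%:R * p) (s + j%:R * p) u = S t s u.
Proof.
elim: j => [|j IH] st; first by rewrite !mul0r !addr0.
have shift r : r + j.+1%:R * p = r + j%:R * p + p.
  by rewrite -addn1 natrD mulrDl mul1r addrA.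
by rewrite !shift S_per ?lerD2r // IH.
Qed.

Lemma Phi_add_periods (j : nat) t : Phi S p (t + j%:R * p) = Phi S p t.
Proof. by apply/funext => x; rewrite /Phi addrAC S_shift_periods // lerDl. Qed.

Lemma S_Phi_comm a b x : a <= b -> S b a (Phi S p a x) = Phi S p b (S b a x).
Proof.
move=> ab; rewrite /Phi S_semiflow ?lerDl //.
by rewrite -(S_per _ ab) S_semiflow ?lerDl ?lerD2r.
Qed.

Lemma S_periods_iter_Phi (j : nat) t x : S (t + j%:R * p) t x = iter j (Phi S p t) x.
Proof.
have t_le k : t <= t + k%:R * p by rewrite lerDl mulr_ge0.
elim: j => [|j IH]; first by rewrite mul0r addr0 S_id.
rewrite -(@S_semiflow t (t + j%:R * p)) ?t_le //; last first.
  by rewrite lerD2l ler_wpM2r // ler_nat.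
by rewrite /= -IH -(Phi_add_periods j) /Phi -addn1 natrD mulrDl mul1r addrA.
Qed.

Lemma Gset_add_periods (j : nat) t gamma :
  Gset S p (t + j%:R * p) gamma = Gset S p t gamma.
Proof. by rewrite /Gset Phi_add_periods. Qed.

Hypothesis S_lip : forall s t, s <= t -> lipschitz_map (S t s).
Hypothesis S_zero : forall s t, s <= t -> S t s 0 = 0.

Lemma Gset_image a b gamma : a <= b -> S b a @` Gset S p a gamma `<=` Gset S p b gamma.
Proof.
move=> ab _ [u [w [orbit_w growth_w]] <-].
have [C C0 HC] := lipschitz_map_linear_bound (S_lip ab) (S_zero ab).
exists (S b a \o w); split.
  exact: (neg_semiorbit_map orbit_w (fun x => S_Phi_comm x ab)).
by apply: (growth_le_dominated (j := 0)) C0 _ growth_w => k /=; rewrite add0n.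
Qed.

End PeriodicSemiflow.

Theorem mainTheorem3 (R : realType) (X : normedModType R)
  (S : R -> R -> X -> X) (p : R) (hp : 0 < p)
  (S_id : forall s (u : X), S s s u = u)
  (S_semiflow : forall s r t (u : X), s <= r -> r <= t -> S t r (S r s u) = S t s u)
  (S_lip : forall s t, s <= t -> lipschitz_map (S t s))
  (S_zero : forall s t, s <= t -> S t s 0 = 0)
  (S_per : forall s t (u : X), s <= t -> S (t + p) (s + p) u = S t s u)
  (gamma : R) (hgamma : 0 < gamma) :
  forall s t : R, s <= t -> S t s @` Gset S p s gamma = Gset S p t gamma.
Proof.
have p_ge0 := ltW hp.
move=> s t st; apply/seteqP; split; first exact: Gset_image.
move=> v [w [orbit_w growth_w]].
pose j := (Num.Def.truncn ((t - s) / p)).+1; pose a := t - j%:R * p.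
have ta : t = a + j%:R * p by rewrite subrK.
have a_s : a <= s.
  rewrite lerBlDr addrC -lerBlDr -ler_pdivrMr //; exact/ltW/truncnS_gt.
have wj_Ga : Gset S p a gamma (w j).
  rewrite -(Gset_add_periods p_ge0 S_per j) -ta.
  exists (fun k => w (j + k)%N); split; first exact: (neg_semiorbit_drop orbit_w j).
  by apply: growth_le_dominated ltr01 _ growth_w => k; rewrite mul1r.
exists (S s a (w j)).
  apply: (Gset_image p_ge0 S_semiflow S_per S_lip S_zero a_s); exact: imageP.
rewrite S_semiflow ?(le_trans a_s) // {1}ta S_periods_iter_Phi //.
rewrite -(Phi_add_periods p_ge0 S_per j) -ta; exact: neg_semiorbit_iter.
Qed.
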